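(* Let $K$, $D$, $N\ge2$, $\mu$, $m=e^{2\pi i\mu}$ be as in the context. Let $(b_i)$ be a solution of the segment equations of $D$ with meridian eigenvalue $m$, with $b=1$ on the boundary segment of the closure, all $b_i\neq 0$, and such that no shape parameter $z$ (at any corner of any crossing) satisfies $|z|=1$ or $z\in\{0,\infty\}$. Let $\beta\in\mathbb{C}^E$ with $e^{2\pi i\beta_i}=b_i$. Then the meromorphic function $t\mapsto W_{D,\mu}(\beta/N+t)$ on $\mathbb{C}^E$ has no poles at points $t\in\mathbb{R}^E$.
   Context: Open diagram, segments, crossing labels, sign and segment equations: $D$ is an oriented blackboard-framed 1-1 tangle diagram whose closure is $K$; segments are edges of the underlying 4-valent graph; the two segments meeting the boundary are boundary segments (joined into one segment in the closure); $E$ is the set of internal segments. At a crossing with both strands oriented left to right: incoming top-left $1$, incoming bottom-left $2$, outgoing bottom-right $1'$ (continuation of $1$), outgoing top-right $2'$ (continuation of $2$); sign $\epsilon=+1$ if $1\to1'$ is over, $-1$ if $2\to2'$ is over. Shape parameters: $z_{\mathrm N}=(b_{2'}/b_1)^\epsilon$, $z_{\mathrm S}=(b_2/b_{1'})^\epsilon$, $z_{\mathrm W}=(b_2/(mb_1))^\epsilon$, $z_{\mathrm E}=(mb_{2'}/b_{1'})^\epsilon$. Segment values $a_1=m^\epsilon\frac{1-z_{\mathrm W}}{1-z_{\mathrm N}}$, $a_{2'}=m^{-\epsilon}\frac{1-z_{\mathrm E}}{1-z_{\mathrm N}}$, $a_2=m^{-\epsilon}\frac{1-z_{\mathrm S}}{1-z_{\mathrm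 W}}$, $a_{1'}=m^{\epsilon}\frac{1-z_{\mathrm S}}{1-z_{\mathrm E}}$; the segment equations require the two values assigned to each segment of the closure (from its two end crossings) to agree. Quantum dilogarithm: for $\mathsf b>0$ let $c_{\mathsf b}=\frac i2(\mathsf b+\mathsf b^{-1})$ and $\Phi_{\mathsf b}(z)=\exp\int_{\mathbb{R}+i0}\frac{e^{-2izw}}{4\sinh(w\mathsf b)\sinh(w/\mathsf b)}\frac{dw}{w}$ for $|\operatorname{Im}z|<|\operatorname{Im}c_{\mathsf b}|$, extended to a meromorphic function on $\mathbb{C}$ (Faddeev's noncompact quantum dilogarithm). Set $E_N(t)=\Phi_{\sqrt N}(i\sqrt N\,t-c_{\sqrt N}+i/\sqrt N)$; it satisfies $E_N(t)=E_N(t-1/N)/(1-e^{2\pi i t})$, and its zeros and poles lie in $\frac1N\mathbb{Z}$. Crossing weights: for a positive crossing $\Lambda^+(t_1,t_2,t_{1'},t_{2'})=\dfrac{E_N(t_{2'}-t_1)\,E_N(t_2-t_{1'})}{E_N(t_2-t_1-\mu/N+1-1/N)\,E_N(t_{2'}-t_{1'}+\mu/N)}\,e^{2\pi i(1-N)(t_2-t_1-\mu/N)+2\pi i\mu(t_2+t_{1'}-t_1-t_{2'})}$; for a negative crossing $\Lambda^-(t_1,t_2,t_{1'},t_{2'})=\dfrac{E_N(t_1-t_2+\mu/N)\,E_N(t_{1'}-t_{2'}-\mu/N+1-1/N)}{E_N(t_1-t_{2'}+1-1/N)\,E_N(t_{1'}-t_2+1-1/N)}\,e^{-2\pi i(1-N)(t_2-t_1-\mu/N)-2\pi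 i\mu(t_2+t_{1'}-t_1-t_{2'})}$. Weight of the diagram: draw $D$ so that at every crossing both strands point left to right, with finitely many turning points (points of vertical tangent, away from crossings). A turning point that is a leftmost point traversed clockwise or a rightmost point traversed counterclockwise has shift $0$; a leftmost point traversed counterclockwise has shift $1/N-1$; a rightmost point traversed clockwise has shift $1-1/N$. Assign a variable $t_i\in\mathbb{C}$ to each $i\in E$ and $0$ to each boundary segment; this is the value at the segment's initial end, and the value at its final end is this plus the sum of the shifts of the turning points along the segment. At each crossing insert the values at the ends meeting it into $\Lambda^{\epsilon}$ (incoming segments $1,2$ and outgoing $1',2'$). Define the meromorphic function $W_{D,\mu}(t)=\prod_{\text{crossings}}\Lambda^{\epsilon}(\dots)$ on $\mathbb{C}^E$; it equals $\exp(N\,\mathcal S_{D,\mu}(t))$ for the action $\mathcal S_{D,\mu}=\frac1N\sum_{\text{crossings}}\log\Lambda^\epsilon$. *)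

From Stdlib Require Import Reals List ZArith.
From Coquelicot Require Import Coquelicot.
Import ListNotations.

Local Open Scope C_scope.

Definition cexp (z : C) : C :=
  RtoC (exp (Re z)) * (RtoC (cos (Im z)) + Ci * RtoC (sin (Im z))).
Definition csinh (z : C) : C := (cexp z - cexp (- z)) / RtoC 2.

Definition c_b (b : R) : C := Ci * RtoC ((b + / b) / 2).

(* The contour R + i0 passing above the pole w = 0 is realised as the
   horizontal line Im w = delta_b, with 0 < delta_b < pi * min(b, 1/b)
   (below the nearest nonzero poles of the integrand); by Cauchy's theorem
   the integral does not depend on such a choice. *)
Definition delta_b (b : R) : R := (PI / 2 * Rmin b (/ b))%R.

Definition Phi_integrand (b : R) (z : C) (x : R) : C :=
  let w : C := (x, delta_b b) in
  cexp (- RtoC 2 * Ci * z * w) / (RtoC 4 * csinh (w * RtoC b) * csinh (w / RtoC b)) / w.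

(* Phi_b(z) for |Im z| < Im c_b (the integral formula). *)
Definition Phi_strip (b : R) (z : C) : C :=
  cexp (@RInt_gen C_R_CompleteNormedModule (Phi_integrand b z)
          (Rbar_locally m_infty) (Rbar_locally p_infty)).

Definition Nr (N : nat) : R := INR N.

(* E_N(t) = Phi_{sqrt N}(i sqrt N t - c_{sqrt N} + i / sqrt N), valid (integral
   formula) for -1/N < Re t < 1. *)
Definition E_N_strip (N : nat) (t : C) : C :=
  let b := sqrt (Nr N) in
  Phi_strip b (Ci * RtoC b * t - c_b b + Ci / RtoC b).

Definition cprod (f : nat -> C) (n : nat) : C :=
  fold_right Cmult (RtoC 1) (map f (seq 0 n)).

(* Meromorphic continuation of E_N to all of C through the functional equation
   E_N(t) = E_N(t - 1/N) / (1 - e^{2 pi i t}): with k = floor(N Re t), the point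
   t - k/N has real part in [0, 1/N), inside the strip.  At a pole of E_N the
   division is by 0 (junk value 0 in Coquelicot). *)
Definition E_N (N : nat) (t : C) : C :=
  let k : Z := Int_part (Nr N * Re t) in
  let t0 : C := t - RtoC (IZR k / Nr N) in
  match k with
  | Z0 => E_N_strip N t0
  | Zpos p =>
      E_N_strip N t0 /
      cprod (fun j => RtoC 1 - cexp (RtoC (2 * PI) * Ci * (t - RtoC (INR j / Nr N))))
            (Pos.to_nat p)
  | Zneg p =>
      E_N_strip N t0 *
      cprod (fun j => RtoC 1 - cexp (RtoC (2 * PI) * Ci * (t + RtoC (INR (S j) / Nr N))))
            (Pos.to_nat p)
  end.

Definition twopii : C := RtoC (2 * PI) * Ci.

Definition Lambda_plus (N : nat) (mu t1 t2 t1' t2' : C) : C :=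
  let n : C := RtoC (Nr N) in
  E_N N (t2' - t1) * E_N N (t2 - t1')
  / (E_N N (t2 - t1 - mu / n + RtoC 1 - RtoC 1 / n) * E_N N (t2' - t1' + mu / n))
  * cexp (twopii * (RtoC 1 - n) * (t2 - t1 - mu / n)
          + twopii * mu * (t2 + t1' - t1 - t2')).

Definition Lambda_minus (N : nat) (mu t1 t2 t1' t2' : C) : C :=
  let n : C := RtoC (Nr N) in
  E_N N (t1 - t2 + mu / n) * E_N N (t1' - t2' - mu / n + RtoC 1 - RtoC 1 / n)
  / (E_N N (t1 - t2' + RtoC 1 - RtoC 1 / n) * E_N N (t1' - t2 + RtoC 1 - RtoC 1 / n))
  * cexp (- (twopii * (RtoC 1 - n) * (t2 - t1 - mu / n))
          - twopii * mu * (t2 + t1' - t1 - t2')).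

(* Segments: the incoming boundary segment (starting at the left end point of
   the tangle), the outgoing boundary segment (ending at the right end point),
   and the internal segments Int i, i < nE (so E = {0, ..., nE - 1}). *)
Inductive seg : Type := BdIn | BdOut | Int (i : nat).

Definition seg_eq_dec (s s' : seg) : {s = s'} + {s <> s'}.
Proof. decide equality; apply Nat.eq_dec. Defined.

(* A crossing, drawn with both strands pointing left to right:
   incoming top-left 1, incoming bottom-left 2, outgoing bottom-right 1'
   (continuation of 1), outgoing top-right 2' (continuation of 2);
   positive = true iff 1 -> 1' is the over strand (epsilon = +1). *)
Record crossing : Type := Crossing {
  positive : bool;
  s1 : seg; s2 : seg; s1' : seg; s2' : seg }.

(* Turning points (points of vertical tangent) *)
Inductive turn : Type :=
  | LeftCW
  | RightCCW
  | LeftCCW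
  | RightCW.

Definition turn_shift (N : nat) (tp : turn) : R :=
  match tp with
  | LeftCW | RightCCW => 0%R
  | LeftCCW => (/ Nr N - 1)%R
  | RightCW => (1 - / Nr N)%R
  end.

Record diagram : Type := Diagram {
  nE : nat;
  crossings : list crossing;
  turns : seg -> list turn }.

Definition incoming (D : diagram) : list seg :=
  flat_map (fun c => [s1 c; s2 c]) (crossings D).
Definition outgoing (D : diagram) : list seg :=
  flat_map (fun c => [s1' c; s2' c]) (crossings D).

(* Well-formedness: the crossings are the vertices of a 4-valent graph whose
   edges are the segments; every internal segment has exactly one final end
   (where it is incoming) and one initial end (where it is outgoing) at a
   crossing; the incoming boundary segment ends at exactly one crossing and
   starts at none, the outgoing one starts at exactly one crossing and ends at
   none (unless the diagram has no crossings). *)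
Definition wf_diagram (D : diagram) : Prop :=
  (forall i, (i < nE D)%nat ->
     count_occ seg_eq_dec (incoming D) (Int i) = 1%nat /\
     count_occ seg_eq_dec (outgoing D) (Int i) = 1%nat) /\
  (forall i, (nE D <= i)%nat -> ~ In (Int i) (incoming D) /\ ~ In (Int i) (outgoing D)) /\
  ~ In BdIn (outgoing D) /\ ~ In BdOut (incoming D) /\
  (crossings D <> nil ->
     count_occ seg_eq_dec (incoming D) BdIn = 1%nat /\
     count_occ seg_eq_dec (outgoing D) BdOut = 1%nat) /\
  (crossings D = nil -> nE D = 0%nat).

Definition total_shift (N : nat) (D : diagram) (s : seg) : R :=
  fold_right Rplus 0%R (map (turn_shift N) (turns D s)).

Definition init_val (D : diagram) (t : nat -> C) (s : seg) : C :=
  match s with Int i => t i | _ => RtoC 0 end.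
Definition final_val (N : nat) (D : diagram) (t : nat -> C) (s : seg) : C :=
  init_val D t s + RtoC (total_shift N D s).

Definition crossing_weight (N : nat) (mu : C) (D : diagram) (t : nat -> C)
    (c : crossing) : C :=
  (if positive c then Lambda_plus N mu else Lambda_minus N mu)
    (final_val N D t (s1 c)) (final_val N D t (s2 c))
    (init_val D t (s1' c)) (init_val D t (s2' c)).

Definition W (N : nat) (mu : C) (D : diagram) (t : nat -> C) : C :=
  fold_right Cmult (RtoC 1) (map (crossing_weight N mu D t) (crossings D)).

Definition bval (b : nat -> C) (s : seg) : C :=
  match s with Int i => b i | _ => RtoC 1 end.

Definition meridian (mu : C) : C := cexp (twopii * mu).

Definition epow (eps : bool) (z : C) : C := if eps then z else / z.

Definition zN (mu : C) (b : nat -> C) (c : crossing) : C :=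
  epow (positive c) (bval b (s2' c) / bval b (s1 c)).
Definition zS (mu : C) (b : nat -> C) (c : crossing) : C :=
  epow (positive c) (bval b (s2 c) / bval b (s1' c)).
Definition zW (mu : C) (b : nat -> C) (c : crossing) : C :=
  epow (positive c) (bval b (s2 c) / (meridian mu * bval b (s1 c))).
Definition zE (mu : C) (b : nat -> C) (c : crossing) : C :=
  epow (positive c) (meridian mu * bval b (s2' c) / bval b (s1' c)).

Definition shapes (mu : C) (b : nat -> C) (c : crossing) : list C :=
  [zN mu b c; zS mu b c; zW mu b c; zE mu b c].

Definition a_1 (mu : C) (b : nat -> C) (c : crossing) : C :=
  epow (positive c) (meridian mu) * (RtoC 1 - zW mu b c) / (RtoC 1 - zN mu b c).
Definition a_2' (mu : C) (b : nat -> C) (c : crossing) : C :=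
  epow (negb (positive c)) (meridian mu) * (RtoC 1 - zE mu b c) / (RtoC 1 - zN mu b c).
Definition a_2 (mu : C) (b : nat -> C) (c : crossing) : C :=
  epow (negb (positive c)) (meridian mu) * (RtoC 1 - zS mu b c) / (RtoC 1 - zW mu b c).
Definition a_1' (mu : C) (b : nat -> C) (c : crossing) : C :=
  epow (positive c) (meridian mu) * (RtoC 1 - zS mu b c) / (RtoC 1 - zE mu b c).

Definition in_values (mu : C) (b : nat -> C) (c : crossing) : list (seg * C) :=
  [(s1 c, a_1 mu b c); (s2 c, a_2 mu b c)].
Definition out_values (mu : C) (b : nat -> C) (c : crossing) : list (seg * C) :=
  [(s1' c, a_1' mu b c); (s2' c, a_2' mu b c)].

(* s (at its final end) and s' (at its initial end) are the two ends of the same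
   segment of the closure K: same segment, or the two boundary segments, which
   are joined in the closure (BdOut's initial end, BdIn's final end). *)
Definition same_closure_segment (s s' : seg) : Prop :=
  s = s' \/ (s = BdIn /\ s' = BdOut).

Definition segment_equations (D : diagram) (mu : C) (b : nat -> C) : Prop :=
  forall c c' s s' v v',
    In c (crossings D) -> In c' (crossings D) ->
    In (s, v) (in_values mu b c) -> In (s', v') (out_values mu b c') ->
    same_closure_segment s s' -> v = v'.

(* A meromorphic function f on C^E (E = {0..nE-1}) has no pole at p iff it is
   (holomorphic, equivalently, by the Riemann extension theorem) bounded on a
   neighbourhood of p. *)
Definition no_pole_at (nE : nat) (f : (nat -> C) -> C) (p : nat -> C) : Prop :=
  exists delta : R, (0 < delta)%R /\ exists M : R,
    forall x : nat -> C,
      (forall i, (i < nE)%nat -> (Cmod (x i - p i) < delta)%R) ->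
      (Cmod (f x) <= M)%R.

From Pilot Require Import Defs.
From Stdlib Require Import Reals List Lra.
From Coquelicot Require Import Coquelicot.

(* Near a real point [t], write the variables as [beta / N + x].  Every factor of [W] is [E_N],
   [1 / E_N] or an exponential, evaluated at an affine function of [x] whose imaginary part at
   [x = t] is [(Im beta_j - Im beta_i +- Im mu) / N].  As [|b_j| = e^{-2 pi Im beta_j}] and
   [|m| = e^{-2 pi Im mu}], the shape parameter [z] belonging to that factor satisfies
   [|z|^{+-1} = e^{-2 pi N Im(argument)}], so [|z| <> 1] keeps every argument off the real axis.
   There [E_N] is bounded above and below, locally uniformly: on the strip [0 <= Re t <= 1/N] it is
   the exponential of Faddeev's integral, whose integrand decays like [e^{-2 |x| / sqrt N}]
   uniformly in the relevant window, and elsewhere the functional equation multiplies or divides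
   it by finitely many factors [1 - e^{2 pi i s}] with [Im s] bounded away from [0].  Hence every
   crossing weight, and their product [W], is bounded near [t]. *)

Local Open Scope R_scope.

Local Notation CR := C_R_CompleteNormedModule.

Lemma exp_le_exp (a b : R) : a <= b -> exp a <= exp b.
Proof. intros [H|H]; [left; apply exp_increasing, H | subst; lra]. Qed.

Lemma cexp_eq (u : C) : cexp u = (exp (Re u) * cos (Im u), exp (Re u) * sin (Im u)).
Proof. destruct u as [a c]. unfold cexp. apply injective_projections; simpl; ring. Qed.

Lemma Cmod_cexp (u : C) : Cmod (cexp u) = exp (Re u).
Proof.
  rewrite cexp_eq. unfold Cmod; simpl.
  set (e := exp (Re u)).
  replace (e * cos (Im u) * (e * cos (Im u) * 1) + e * sin (Im u) * (e * sin (Im u) * 1))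
    with (e * e) by (generalize (sin2_cos2 (Im u)); unfold Rsqr; nra).
  apply sqrt_square. left; apply exp_pos.
Qed.

(* Unlike [Cmod_inv], this holds at [w = 0] too, where both sides are the junk value [0]. *)
Lemma Cmod_Cinv (w : C) : Cmod (/ w) = / Cmod w.
Proof.
  destruct (Ceq_dec w (RtoC 0)) as [->|Hw]; [|exact (Cmod_inv w Hw)].
  rewrite Cmod_0, Rinv_0. replace (/ RtoC 0)%C with (RtoC 0); [apply Cmod_0|].
  apply injective_projections; simpl; unfold Rdiv; ring.
Qed.

Lemma Cmod_1_minus_bounds (w : C) :
  Rabs (1 - Cmod w) <= Cmod (RtoC 1 - w) <= 1 + Cmod w.
Proof.
  assert (H1 := Cmod_triangle (RtoC 1 - w) w).
  assert (H2 := Cmod_triangle (- (RtoC 1 - w)) (RtoC 1)).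
  assert (H3 := Cmod_triangle (RtoC 1) (- w)). change (RtoC 1 + - w)%C with (RtoC 1 - w)%C in H3.
  replace (RtoC 1 - w + w)%C with (RtoC 1) in H1 by ring.
  replace (- (RtoC 1 - w) + RtoC 1)%C with w in H2 by ring.
  rewrite Cmod_opp, Cmod_R, Rabs_R1 in *. split; [apply Rabs_le|]; lra.
Qed.

Lemma csinh_eq (a c : R) : csinh (a, c) = (sinh a * cos c, cosh a * sin c).
Proof.
  unfold csinh, sinh, cosh. rewrite !cexp_eq; simpl. rewrite cos_neg, sin_neg.
  apply injective_projections; simpl; field.
Qed.

Lemma Cmod_csinh_ge (a c : R) :
  Rabs (sinh a) <= Cmod (csinh (a, c)) /\ Rabs (sin c) <= Cmod (csinh (a, c)).
Proof.
  rewrite csinh_eq. unfold Cmod; simpl.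
  assert (Hid : cosh a * cosh a = 1 + sinh a * sinh a) by (unfold sinh, cosh;
    assert (exp a * exp (- a) = 1) by (rewrite <- exp_plus, Rplus_opp_r; apply exp_0); nra).
  assert (Hsc := sin2_cos2 c). unfold Rsqr in Hsc.
  assert (Hsum : sinh a * cos c * (sinh a * cos c * 1) + cosh a * sin c * (cosh a * sin c * 1)
                 = sinh a * sinh a + sin c * sin c) by nra.
  rewrite Hsum, <- !sqrt_Rsqr_abs. unfold Rsqr.
  split; apply sqrt_le_1_alt; nra.
Qed.

Lemma Rabs_sinh_ge (a : R) : 2 <= exp (Rabs a) -> exp (Rabs a) / 4 <= Rabs (sinh a).
Proof.
  intros H.
  assert (Hinv : exp (Rabs a) * exp (- Rabs a) = 1) by (rewrite <- exp_plus, Rplus_opp_r; apply exp_0).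
  assert (Hsinh : Rabs (sinh a) = sinh (Rabs a)).
  { unfold sinh. destruct (Rle_dec 0 a).
    - rewrite (Rabs_pos_eq a) by lra. apply Rabs_pos_eq.
      assert (exp (- a) <= exp a) by (apply exp_le_exp; lra). lra.
    - rewrite (Rabs_left a), Ropp_involutive by lra. rewrite Rabs_left1; [lra|].
      assert (exp a <= exp (- a)) by (apply exp_le_exp; lra). lra. }
  rewrite Hsinh. unfold sinh. generalize (exp_pos (- Rabs a)). nra.
Qed.

(* For large [|a|] the bound comes from [sinh a], for small [|a|] from [sin c]. *)
Lemma Cmod_csinh_exp_ge (a c : R) :
  Rmin (1 / 4) (Rabs (sin c) / 2) * exp (Rabs a) <= Cmod (csinh (a, c)).
Proof.
  destruct (Cmod_csinh_ge a c) as [Hsh Hsn].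
  destruct (Rle_dec 2 (exp (Rabs a))) as [Hbig|Hsmall].
  - generalize (Rabs_sinh_ge a Hbig) (Rmin_l (1/4) (Rabs (sin c) / 2)) (exp_pos (Rabs a)). nra.
  - generalize (Rmin_r (1/4) (Rabs (sin c) / 2)) (exp_pos (Rabs a)) (Rabs_pos (sin c)). nra.
Qed.

(** * Improper integrals of exponentially decaying functions *)

Lemma norm_C_R (z : C) : @norm R_AbsRing C_R_NormedModule z = Cmod z.
Proof.
  destruct z as [a c]. unfold norm; simpl. unfold prod_norm, Cmod; simpl. f_equal.
  change (norm a) with (Rabs a). change (norm c) with (Rabs c).
  rewrite !Rmult_1_r, <- !Rabs_mult, !Rabs_pos_eq by nra. reflexivity.
Qed.

Section ExpDominated.
Variables (f : R -> C) (K k : R).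
Hypothesis k_pos : 0 < k.
Hypothesis K_ge0 : 0 <= K.
Hypothesis f_int : forall a b, @ex_RInt CR f a b.
Hypothesis f_dom : forall x, Cmod (f x) <= K * exp (- k * Rabs x).

Local Notation If u v := (@RInt CR f u v).
Local Notation tail M := (K / k * exp (- k * M)).

Lemma Cmod_RInt_le_antiderivative (u v : R) (g : R -> R) (G : R -> R) :
  u <= v -> (forall x, u <= x <= v -> K * exp (- k * Rabs x) <= g x) ->
  (forall x, is_derive G x (g x)) -> (forall x, continuous g x) ->
  Cmod (If u v) <= G v - G u.
Proof.
  intros Huv Hg HG Hc. rewrite <- norm_C_R.
  apply (@norm_RInt_le C_R_NormedModule f g u v _ _ Huv).
  - intros x Hx. rewrite norm_C_R. eapply Rle_trans; [apply f_dom | apply Hg, Hx].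
  - apply (@RInt_correct CR), f_int.
  - apply (is_RInt_derive G g); intros x _; [apply HG | apply Hc].
Qed.

Lemma Cmod_RInt_tail_pos (M u v : R) : 0 <= M -> M <= u <= v -> Cmod (If u v) <= tail M.
Proof.
  intros HM Huv.
  eapply Rle_trans.
  - apply (Cmod_RInt_le_antiderivative u v (fun x => K * exp (- k * x))
                                          (fun x => - (K / k) * exp (- k * x)));
      [lra | | | ].
    + intros x Hx. rewrite Rabs_pos_eq by lra. lra.
    + intros x. auto_derive; [exact I | field; lra].
    + intros x. apply continuity_pt_filterlim. reg.
  - assert (exp (- k * u) <= exp (- k * M)) by (apply exp_le_exp; nra).
    assert (0 <= K / k) by (apply Rdiv_le_0_compat; lra).
    generalize (exp_pos (- k * v)). nra.
Qed.

Lemma Cmod_RInt_tail_neg (M u v : R) : 0 <= M -> u <= v <= - M -> Cmod (If u v) <= tail M.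
Proof.
  intros HM Huv.
  eapply Rle_trans.
  - apply (Cmod_RInt_le_antiderivative u v (fun x => K * exp (k * x)) (fun x => K / k * exp (k * x)));
      [lra | | | ].
    + intros x Hx. rewrite Rabs_left1 by lra. right. do 2 f_equal. ring.
    + intros x. auto_derive; [exact I | field; lra].
    + intros x. apply continuity_pt_filterlim. reg.
  - assert (exp (k * v) <= exp (- k * M)) by (apply exp_le_exp; nra).
    assert (0 <= K / k) by (apply Rdiv_le_0_compat; lra).
    generalize (exp_pos (k * u)). nra.
Qed.

Lemma Cmod_RInt_swap (u v : R) : Cmod (If u v) = Cmod (If v u).
Proof. rewrite <- opp_RInt_swap by apply f_int. apply Cmod_opp. Qed.

Lemma Cmod_RInt_tail (M u v : R) : 0 <= M ->
  (M <= u /\ M <= v) \/ (u <= - M /\ v <= - M) -> Cmod (If u v) <= tail M.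
Proof.
  intros HM Htail.
  destruct (Rle_dec u v); [|rewrite Cmod_RInt_swap];
    (destruct Htail; [apply Cmod_RInt_tail_pos | apply Cmod_RInt_tail_neg]); lra.
Qed.

Lemma tail_vanishes (eps : R) : 0 < eps -> exists M, 0 <= M /\ 2 * tail M < eps.
Proof.
  intros He. set (r := 2 * K / (k * eps) + 1).
  assert (Hr : 1 <= r) by (unfold r; assert (0 <= 2 * K / (k * eps)) by
    (apply Rdiv_le_0_compat; nra); lra).
  exists (ln r / k). split; [apply Rdiv_le_0_compat; [rewrite <- ln_1; apply ln_le|]; lra|].
  replace (- k * (ln r / k)) with (- ln r) by (field; lra).
  rewrite exp_Ropp, exp_ln by lra.
  apply (Rmult_lt_reg_r r); [lra|].
  replace (2 * (K / k * / r) * r) with (2 * K / k) by (field; lra).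
  unfold r. replace (eps * (2 * K / (k * eps) + 1)) with (2 * K / k + eps) by (field; lra). lra.
Qed.

Lemma eventually_outside (M : R) :
  filter_prod (Rbar_locally m_infty) (Rbar_locally p_infty)
    (fun ab : R * R => fst ab < - M /\ M < snd ab).
Proof.
  apply (Filter_prod _ _ _ (fun a => a < - M) (fun b => M < b)); [exists (- M) | exists M | ]; auto.
Qed.

Lemma ex_RInt_gen_exp_dominated :
  exists y : C, is_RInt_gen f (Rbar_locally m_infty) (Rbar_locally p_infty) y.
Proof.
  refine (proj1 (filterlimi_locally_cauchy (U := CR)
            (FF := filter_prod_proper (FF := Rbar_locally_filter m_infty)
                                      (FG := Rbar_locally_filter p_infty))
            (fun ab : R * R => is_RInt f (fst ab) (snd ab)) _) _).
  - apply filter_forall. intros [a b]; simpl. split.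
    + exists (If a b). apply (@RInt_correct CR), f_int.
    + intros y1 y2 H1 H2.
      now rewrite <- (@is_RInt_unique CR _ _ _ _ H1), <- (@is_RInt_unique CR _ _ _ _ H2).
  - intros eps. destruct (tail_vanishes eps (cond_pos eps)) as [M [HM Heps]].
    exists (fun ab : R * R => fst ab < - M /\ M < snd ab). split; [apply eventually_outside|].
    intros [u1 u2] [v1 v2] [Hu1 Hu2] [Hv1 Hv2] u' v' Hu Hv; simpl in *.
    rewrite <- (@is_RInt_unique CR _ _ _ _ Hu), <- (@is_RInt_unique CR _ _ _ _ Hv).
    apply (@norm_compat1 R_AbsRing C_R_NormedModule). rewrite norm_C_R.
    match goal with |- Cmod ?d < _ => replace d with (If v1 u1 + If u2 v2)%C end.
    + eapply Rle_lt_trans; [apply Cmod_triangle|].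
      generalize (Cmod_RInt_tail M v1 u1 HM ltac:(lra)) (Cmod_RInt_tail M u2 v2 HM ltac:(lra)).
      lra.
    + rewrite <- (@RInt_Chasles CR f v1 u1 v2), <- (@RInt_Chasles CR f u1 u2 v2) by apply f_int.
      destruct (If v1 u1), (If u1 u2), (If u2 v2).
      apply injective_projections; simpl; unfold plus, opp; simpl; ring.
Qed.

Lemma is_RInt_gen_RInt_lim (y : C) :
  is_RInt_gen f (Rbar_locally m_infty) (Rbar_locally p_infty) y ->
  filterlim (fun ab : R * R => If (fst ab) (snd ab))
    (filter_prod (Rbar_locally m_infty) (Rbar_locally p_infty)) (locally y).
Proof.
  intros Hy P HP. generalize (Hy P HP). unfold filtermapi, filtermap. apply filter_imp.
  intros [a b] [z [Hz HPz]]; simpl in *. now rewrite (@is_RInt_unique CR _ _ _ _ Hz).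
Qed.

Lemma Cmod_RInt_gen_exp_dominated :
  Cmod (@RInt_gen CR f (Rbar_locally m_infty) (Rbar_locally p_infty))
    <= 2 * K / k.
Proof.
  destruct ex_RInt_gen_exp_dominated as [y Hy].
  rewrite (is_RInt_gen_unique (V := CR) f y Hy), <- norm_C_R.
  apply (closed_filterlim_loc _ (fun z => @norm R_AbsRing C_R_NormedModule z <= 2 * K / k) y
           (is_RInt_gen_RInt_lim y Hy)).
  - generalize (eventually_outside 0). apply filter_imp. intros ab Hab; simpl in Hab.
    rewrite norm_C_R, <- (@RInt_Chasles CR f _ 0) by apply f_int.
    eapply Rle_trans; [apply Cmod_triangle|].
    generalize (Cmod_RInt_tail 0 (fst ab) 0 (Rle_refl 0) ltac:(lra))
               (Cmod_RInt_tail 0 0 (snd ab) (Rle_refl 0) ltac:(lra)).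
    rewrite Rmult_0_r, exp_0. unfold Rdiv. lra.
  - apply (closed_comp _ (fun r => r <= 2 * K / k)); [apply filterlim_norm | apply closed_le].
Qed.

End ExpDominated.

Definition C_continuity_pt (f : R -> C) (x : R) : Prop :=
  continuity_pt (fun y => Re (f y)) x /\ continuity_pt (fun y => Im (f y)) x.

Lemma C_continuity_pt_continuous (f : R -> C) (x : R) :
  C_continuity_pt f x -> @continuous R_UniformSpace CR f x.
Proof.
  intros [H1 H2]. apply continuity_pt_filterlim in H1, H2.
  apply filterlim_locally. intros eps.
  generalize (filter_and _ _ (proj1 (filterlim_locally _ _) H1 eps)
                             (proj1 (filterlim_locally _ _) H2 eps)).
  apply filter_imp. intros y [Ha Hb]. split; assumption.
Qed.

Lemma C_continuity_pt_const (c : C) (x : R) : C_continuity_pt (fun _ => c) x.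
Proof. split; apply continuity_pt_const; intros a b; reflexivity. Qed.

Lemma C_continuity_pt_pair (r s : R -> R) (x : R) :
  continuity_pt r x -> continuity_pt s x -> C_continuity_pt (fun y => (r y, s y)) x.
Proof. split; assumption. Qed.

Lemma C_continuity_pt_RtoC (r : R -> R) (x : R) :
  continuity_pt r x -> C_continuity_pt (fun y => RtoC (r y)) x.
Proof.
  intros H. apply C_continuity_pt_pair; [exact H | apply continuity_pt_const; intros a b; reflexivity].
Qed.

Lemma C_continuity_pt_plus (f g : R -> C) (x : R) :
  C_continuity_pt f x -> C_continuity_pt g x -> C_continuity_pt (fun y => f y + g y)%C x.
Proof. intros [] []; split; apply continuity_pt_plus; assumption. Qed.

Lemma C_continuity_pt_opp (f : R -> C) (x : R) :
  C_continuity_pt f x -> C_continuity_pt (fun y => - f y)%C x.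
Proof. intros []; split; apply continuity_pt_opp; assumption. Qed.

Lemma C_continuity_pt_mult (f g : R -> C) (x : R) :
  C_continuity_pt f x -> C_continuity_pt g x -> C_continuity_pt (fun y => f y * g y)%C x.
Proof.
  intros [] []; split; simpl;
    [apply continuity_pt_minus | apply continuity_pt_plus]; apply continuity_pt_mult; assumption.
Qed.

Lemma C_continuity_pt_inv (f : R -> C) (x : R) :
  C_continuity_pt f x -> f x <> RtoC 0 -> C_continuity_pt (fun y => / f y)%C x.
Proof.
  intros [F1 F2] Hx.
  assert (Hsq : continuity_pt (fun y => Re (f y) * (Re (f y) * 1) + Im (f y) * (Im (f y) * 1)) x).
  { apply continuity_pt_plus; apply continuity_pt_mult; try assumption;
      apply continuity_pt_mult; try assumption; apply continuity_pt_const; intros a b; reflexivity. }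
  assert (Hne : Re (f x) * (Re (f x) * 1) + Im (f x) * (Im (f x) * 1) <> 0).
  { intros E. apply Hx. destruct (f x) as [a c]; simpl in *.
    apply injective_projections; simpl; nra. }
  split; simpl; apply continuity_pt_div; try assumption; apply continuity_pt_opp; assumption.
Qed.

Lemma C_continuity_pt_cexp (f : R -> C) (x : R) :
  C_continuity_pt f x -> C_continuity_pt (fun y => cexp (f y)) x.
Proof.
  intros [F1 F2].
  assert (Hcomp : forall h : R -> R, (forall r, derivable_pt h r) ->
            forall u : R -> R, continuity_pt u x -> continuity_pt (fun y => h (u y)) x).
  { intros h Hh u Hu. apply (continuity_pt_comp u h x Hu), derivable_continuous_pt, Hh. }
  unfold cexp. apply C_continuity_pt_mult;
    [| apply C_continuity_pt_plus; [| apply C_continuity_pt_mult; [apply C_continuity_pt_const|]]];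
    apply C_continuity_pt_RtoC, Hcomp; auto using derivable_pt_exp, derivable_pt_cos, derivable_pt_sin.
Qed.

Lemma C_continuity_pt_csinh (f : R -> C) (x : R) :
  C_continuity_pt f x -> C_continuity_pt (fun y => csinh (f y)) x.
Proof.
  intros H. unfold csinh, Cdiv. apply C_continuity_pt_mult.
  - apply C_continuity_pt_plus; [|apply C_continuity_pt_opp];
      apply C_continuity_pt_cexp; [|apply C_continuity_pt_opp]; exact H.
  - apply C_continuity_pt_inv; [apply C_continuity_pt_const|].
    intros E. injection E. lra.
Qed.

(** * The Faddeev integral and [E_N] off the real axis *)

Section FaddeevIntegral.
Variable b : R.
Hypothesis b_pos : 0 < b.
Hypothesis b_sq_ge2 : 2 <= b * b.

Let b_gt1 : 1 < b.
Proof. nra. Qed.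

Lemma delta_b_eq : delta_b b = PI / (2 * b).
Proof.
  assert (Hb := b_gt1). unfold delta_b. rewrite Rmin_right.
  - field. lra.
  - apply Rle_trans with 1; [|lra]. rewrite <- Rinv_1. left. apply Rinv_lt_contravar; lra.
Qed.

Let delta := PI / (2 * b).

Let delta_pos : 0 < delta.
Proof. unfold delta. generalize PI_RGT_0; intros. apply Rdiv_lt_0_compat; lra. Qed.

Let k2 := Rmin (1 / 4) (Rabs (sin (delta / b)) / 2).

Let k2_pos : 0 < k2.
Proof.
  assert (Hs : 0 < sin (delta / b)).
  { apply sin_gt_0; unfold delta; generalize PI_RGT_0 b_gt1; intros.
    - apply Rdiv_lt_0_compat; [apply delta_pos | lra].
    - replace (PI / (2 * b) / b) with (PI * / (2 * (b * b))) by (field; lra).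
      rewrite <- (Rmult_1_r PI) at 2. apply Rmult_lt_compat_l; [lra|].
      rewrite <- Rinv_1. apply Rinv_lt_contravar; lra. }
  unfold k2, Rmin. destruct (Rle_dec _ _); [lra|]. rewrite Rabs_pos_eq; lra.
Qed.

(* The contour height [delta] puts [w * b] on the line [Im = PI / 2], where [sin = 1]. *)
Lemma Cmod_csinh_mul_b_ge (x : R) :
  exp (b * Rabs x) / 4 <= Cmod (csinh ((x, delta) * RtoC b)%C).
Proof.
  replace ((x, delta) * RtoC b)%C with (x * b, PI / 2).
  - eapply Rle_trans; [|apply Cmod_csinh_exp_ge]. rewrite sin_PI2, Rabs_R1.
    rewrite Rmin_left, Rabs_mult, (Rabs_pos_eq b) by lra.
    right. rewrite (Rmult_comm (Rabs x) b). field.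
  - apply injective_projections; simpl; unfold delta; field; lra.
Qed.

Lemma Cmod_csinh_div_b_ge (x : R) :
  k2 * exp (Rabs x / b) <= Cmod (csinh ((x, delta) / RtoC b)%C).
Proof.
  replace ((x, delta) / RtoC b)%C with (x / b, delta / b).
  - eapply Rle_trans; [|apply Cmod_csinh_exp_ge].
    unfold Rdiv. rewrite Rabs_mult, Rabs_inv, (Rabs_pos_eq b) by lra. right. reflexivity.
  - apply injective_projections; simpl; field; lra.
Qed.

Let Cmod_contour_ge (x : R) : delta <= Cmod (x, delta).
Proof.
  eapply Rle_trans; [|apply Rmax_Cmod]. simpl.
  rewrite (Rabs_pos_eq delta) by (generalize delta_pos; lra). apply Rmax_r.
Qed.

Lemma Phi_denominator_ge (x : R) :
  k2 * exp ((b + / b) * Rabs x)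
    <= Cmod (RtoC 4 * csinh ((x, delta) * RtoC b) * csinh ((x, delta) / RtoC b)).
Proof.
  rewrite !Cmod_mult, Cmod_R, (Rabs_pos_eq 4) by lra.
  replace ((b + / b) * Rabs x) with (b * Rabs x + Rabs x / b) by (field; apply Rgt_not_eq; lra).
  rewrite exp_plus.
  generalize (Cmod_csinh_mul_b_ge x) (Cmod_csinh_div_b_ge x) (exp_pos (b * Rabs x)) k2_pos.
  set (e := exp (Rabs x / b)). assert (0 < e) by apply exp_pos.
  intros H1 H2 He1 Hk2. apply (Rle_trans _ (4 * (exp (b * Rabs x) / 4) * (k2 * e))); [lra|].
  apply Rmult_le_compat; [lra | apply Rmult_le_pos; lra | lra | exact H2].
Qed.

Definition Im_window (y : R) : Prop := (/ b - b) / 2 <= y <= (/ b - b) / 2 + / b.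

(* [b * b >= 2] is exactly what makes the growth [exp (2 Im z x)] of the numerator lose against
   the growth [exp ((b + 1/b) |x|)] of the denominator, at rate [2 / b]. *)
Lemma integrand_exponent_le (z : C) (A x : R) : Rabs (Re z) <= A -> Im_window (Im z) ->
  2 * (Re z * delta + Im z * x) - (b + / b) * Rabs x <= 2 * A * delta - 2 / b * Rabs x.
Proof.
  intros HA [Hz1 Hz2].
  assert (Hd := delta_pos). assert (Hib : 0 < / b) by (apply Rinv_0_lt_compat; lra).
  assert (Hbi : b * / b = 1) by (field; lra).
  assert (Re z * delta <= A * delta) by (apply Rmult_le_compat_r; generalize (Rle_abs (Re z)); lra).
  unfold Rdiv. destruct (Rle_dec 0 x).
  - rewrite Rabs_pos_eq by lra.
    assert (Im z * x <= ((/ b - b) / 2 + / b) * x) by (apply Rmult_le_compat_r; lra).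
    assert (/ b * x <= b / 2 * x) by (apply Rmult_le_compat_r; [lra|]; nra).
    nra.
  - rewrite Rabs_left by lra.
    assert (Im z * x <= (/ b - b) / 2 * x) by nra.
    nra.
Qed.

Lemma Cmod_Phi_integrand_le (z : C) (A x : R) : Rabs (Re z) <= A -> Im_window (Im z) ->
  Cmod (Phi_integrand b z x) <= exp (2 * A * delta) / (k2 * delta) * exp (- (2 / b) * Rabs x).
Proof.
  intros HA Hz. unfold Phi_integrand. rewrite delta_b_eq. fold delta.
  assert (Hd := delta_pos). assert (Hk2 := k2_pos).
  assert (Hden := Phi_denominator_ge x). assert (Hw := Cmod_contour_ge x).
  assert (Hc := exp_pos ((b + / b) * Rabs x)).
  set (den := (RtoC 4 * csinh ((x, delta) * RtoC b) * csinh ((x, delta) / RtoC b))%C) in *.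
  set (P := 2 * (Re z * delta + Im z * x)).
  assert (HP : Cmod (cexp (- RtoC 2 * Ci * z * (x, delta))) = exp P)
    by (rewrite Cmod_cexp; f_equal; unfold P; destruct z; simpl; ring).
  unfold Cdiv. rewrite !Cmod_mult, !Cmod_Cinv, HP.
  apply Rle_trans with (exp (P - (b + / b) * Rabs x) / (k2 * delta)).
  - replace (exp (P - (b + / b) * Rabs x) / (k2 * delta))
      with (exp P * / (k2 * exp ((b + / b) * Rabs x) * delta))
      by (unfold Rminus; rewrite exp_plus, exp_Ropp; field; repeat split; lra).
    rewrite Rmult_assoc, <- Rinv_mult.
    apply Rmult_le_compat_l; [left; apply exp_pos|].
    apply Rinv_le_contravar; [apply Rmult_lt_0_compat; [apply Rmult_lt_0_compat|]; lra|].
    apply Rmult_le_compat; [apply Rmult_le_pos; lra | lra | exact Hden | exact Hw].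
  - replace (exp (2 * A * delta) / (k2 * delta) * exp (- (2 / b) * Rabs x))
      with (exp (2 * A * delta - 2 / b * Rabs x) / (k2 * delta))
      by (unfold Rminus; rewrite exp_plus, Ropp_mult_distr_l; field; lra).
    apply Rmult_le_compat_r; [left; apply Rinv_0_lt_compat; nra|].
    apply exp_le_exp, integrand_exponent_le; assumption.
Qed.

Lemma ex_RInt_Phi_integrand (z : C) (u v : R) :
  @ex_RInt CR (Phi_integrand b z) u v.
Proof.
  apply ex_RInt_continuous. intros y _. apply C_continuity_pt_continuous.
  unfold Phi_integrand. rewrite delta_b_eq. fold delta.
  assert (Hnz : forall w : C, 0 < Cmod w -> w <> RtoC 0).
  { intros w Hw E. rewrite E, Cmod_0 in Hw. lra. }
  assert (Hw : C_continuity_pt (fun x : R => (x, delta)) y).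
  { apply C_continuity_pt_pair; [apply continuity_pt_id|].
    apply continuity_pt_const; intros r s; reflexivity. }
  assert (Hb : C_continuity_pt (fun _ => / RtoC b)%C y).
  { apply C_continuity_pt_inv; [apply C_continuity_pt_const|].
    apply Hnz. rewrite Cmod_R, Rabs_pos_eq; lra. }
  apply C_continuity_pt_mult with (f := fun x => (cexp _ / _)%C); [apply C_continuity_pt_mult|].
  - apply C_continuity_pt_cexp, C_continuity_pt_mult; [apply C_continuity_pt_const | exact Hw].
  - apply C_continuity_pt_inv.
    + apply C_continuity_pt_mult; [apply C_continuity_pt_mult; [apply C_continuity_pt_const|]|];
        apply C_continuity_pt_csinh, C_continuity_pt_mult;
        first [exact Hw | exact Hb | apply C_continuity_pt_const].
    + apply Hnz. eapply Rlt_le_trans; [|apply Phi_denominator_ge].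
      apply Rmult_lt_0_compat; [apply k2_pos | apply exp_pos].
  - apply C_continuity_pt_inv; [exact Hw|].
    apply Hnz. eapply Rlt_le_trans; [apply delta_pos | apply Cmod_contour_ge].
Qed.

Lemma Faddeev_integral_bounded (A : R) : 0 <= A ->
  exists B, forall z : C, Rabs (Re z) <= A -> Im_window (Im z) ->
    Cmod (@RInt_gen CR (Phi_integrand b z)
            (Rbar_locally m_infty) (Rbar_locally p_infty)) <= B.
Proof.
  intros HA0. exists (2 * (exp (2 * A * delta) / (k2 * delta)) / (2 / b)).
  intros z HA Hz. apply Cmod_RInt_gen_exp_dominated.
  - apply Rdiv_lt_0_compat; lra.
  - left. apply Rdiv_lt_0_compat; [apply exp_pos|].
    apply Rmult_lt_0_compat; [apply k2_pos | apply delta_pos].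
  - apply ex_RInt_Phi_integrand.
  - intros x. apply Cmod_Phi_integrand_le; assumption.
Qed.

End FaddeevIntegral.

Definition Cmod_pm_le (M : R) (z : C) : Prop := Cmod z <= M /\ Cmod (/ z) <= M.

Lemma Cmod_pm_le_trans (M M' : R) (z : C) : M <= M' -> Cmod_pm_le M z -> Cmod_pm_le M' z.
Proof. intros H [H1 H2]. split; lra. Qed.

Lemma Cmod_pm_le_Cinv (M : R) (z : C) : Cmod_pm_le M z -> Cmod_pm_le M (/ z).
Proof. intros [H1 H2]. split; [exact H2|]. rewrite !Cmod_Cinv, Rinv_inv. exact H1. Qed.

Lemma Cmod_pm_le_mult (M1 M2 : R) (z1 z2 : C) :
  Cmod_pm_le M1 z1 -> Cmod_pm_le M2 z2 -> Cmod_pm_le (M1 * M2) (z1 * z2).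
Proof.
  intros [H1 H1'] [H2 H2']. rewrite Cmod_Cinv in H1', H2'.
  assert (0 <= / Cmod z1) by (rewrite <- Cmod_Cinv; apply Cmod_ge_0).
  assert (0 <= / Cmod z2) by (rewrite <- Cmod_Cinv; apply Cmod_ge_0).
  split; rewrite ?Cmod_Cinv, Cmod_mult; [|rewrite Rinv_mult];
    apply Rmult_le_compat; auto using Cmod_ge_0.
Qed.

Lemma Cmod_pm_le_cexp (B : R) (w : C) : Cmod w <= B -> Cmod_pm_le (exp B) (cexp w).
Proof.
  intros HB. assert (Hre := re_le_Cmod w).
  unfold Cmod_pm_le. rewrite Cmod_Cinv, Cmod_cexp, <- exp_Ropp. split; apply exp_le_exp;
    generalize (Rle_abs (Re w)) (Rle_abs (- Re w)); rewrite Rabs_Ropp; lra.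
Qed.

Lemma Cmod_pm_le_cprod (U : R) (f : nat -> C) (n : nat) :
  (forall j, Cmod_pm_le U (f j)) -> Cmod_pm_le (U ^ n) (cprod f n).
Proof.
  intros Hf. unfold cprod. rewrite <- (length_seq n 0) at 1.
  induction (seq 0 n) as [|j l IH]; simpl.
  - unfold Cmod_pm_le. rewrite Cmod_Cinv, Cmod_R, Rabs_R1, Rinv_1. split; lra.
  - apply Cmod_pm_le_mult; [apply Hf | exact IH].
Qed.

Lemma Re_Faddeev_arg (b : R) (t0 : C) : b <> 0 ->
  Re (Ci * RtoC b * t0 - c_b b + Ci / RtoC b) = - b * Im t0.
Proof. intros Hb. destruct t0. unfold c_b. simpl. field. exact Hb. Qed.

Lemma Im_Faddeev_arg (b : R) (t0 : C) : b <> 0 ->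
  Im (Ci * RtoC b * t0 - c_b b + Ci / RtoC b) = b * Re t0 + (/ b - b) / 2.
Proof. intros Hb. destruct t0. unfold c_b. simpl. field. exact Hb. Qed.

Lemma Nr_ge2 (N : nat) : (2 <= N)%nat -> 2 <= Nr N.
Proof. intros H. unfold Nr. apply le_INR in H. simpl in H. lra. Qed.

(* On the strip [0 <= Re t0 <= 1/N] the argument of [Phi_strip] stays in the window where
   the Faddeev integral converges uniformly, since [sqrt N * (1/N) = 1 / sqrt N]. *)
Lemma E_N_strip_bounded (N : nat) (A : R) : (2 <= N)%nat -> 0 <= A ->
  exists M, forall t0 : C, 0 <= Re t0 <= / Nr N -> Rabs (Im t0) <= A ->
    Cmod_pm_le M (E_N_strip N t0).
Proof.
  intros HN HA. set (b := sqrt (Nr N)). assert (HN2 := Nr_ge2 N HN).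
  assert (Hbb : b * b = Nr N) by (apply sqrt_sqrt; lra).
  assert (Hb : 0 < b) by (apply sqrt_lt_R0; lra).
  destruct (Faddeev_integral_bounded b Hb ltac:(lra) (b * A) ltac:(nra)) as [B HB].
  exists (exp B). intros t0 Hre Him. apply Cmod_pm_le_cexp, HB; fold b.
  - rewrite Re_Faddeev_arg by (apply Rgt_not_eq; lra).
    rewrite Rabs_mult, Rabs_Ropp, (Rabs_pos_eq b) by lra.
    apply Rmult_le_compat_l; lra.
  - rewrite Im_Faddeev_arg by (apply Rgt_not_eq; lra). unfold Im_window.
    assert (Hinv : b * / Nr N = / b) by (rewrite <- Hbb; field; lra).
    assert (b * Re t0 <= / b) by (rewrite <- Hinv; apply Rmult_le_compat_l; lra).
    assert (0 <= b * Re t0) by (apply Rmult_le_pos; lra).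
    lra.
Qed.

Lemma Cmod_pm_le_one_minus_cexp (a A : R) (s : C) : 0 < a -> a <= Rabs (Im s) <= A ->
  Cmod_pm_le (Rmax (1 + exp (2 * PI * A)) (/ (1 - exp (- (2 * PI * a)))))
    (RtoC 1 - cexp (RtoC (2 * PI) * Ci * s)).
Proof.
  intros Ha [HaI HIA]. assert (HPI := PI_RGT_0).
  set (e := exp (- (2 * PI * Im s))).
  assert (He : Cmod (cexp (RtoC (2 * PI) * Ci * s)) = e)
    by (rewrite Cmod_cexp; unfold e; f_equal; destruct s; simpl; ring).
  destruct (Cmod_1_minus_bounds (cexp (RtoC (2 * PI) * Ci * s))) as [Hlow Hup]. rewrite He in *.
  set (l := 1 - exp (- (2 * PI * a))).
  assert (Hl : 0 < l) by (unfold l; rewrite <- exp_0; assert (exp (- (2 * PI * a)) < exp 0)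
    by (apply exp_increasing; nra); lra).
  assert (Hel : l <= Rabs (1 - e)).
  { destruct (Rle_dec 0 (Im s)).
    - rewrite Rabs_pos_eq in HaI by lra.
      assert (e <= exp (- (2 * PI * a))) by (apply exp_le_exp; nra).
      rewrite Rabs_pos_eq; unfold l in *; lra.
    - rewrite Rabs_left in HaI by lra.
      assert (Hx : exp (2 * PI * a) * exp (- (2 * PI * a)) = 1)
        by (rewrite <- exp_plus, Rplus_opp_r; apply exp_0).
      assert (exp (2 * PI * a) <= e) by (apply exp_le_exp; nra).
      assert (1 <= exp (2 * PI * a)) by (rewrite <- exp_0; apply exp_le_exp; nra).
      rewrite Rabs_left1; unfold l in *; nra. }
  split.
  - eapply Rle_trans; [exact Hup|]. eapply Rle_trans; [|apply Rmax_l].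
    assert (e <= exp (2 * PI * A)); [|lra].
    apply exp_le_exp. generalize (Rle_abs (- Im s)). rewrite Rabs_Ropp. nra.
  - eapply Rle_trans; [|apply Rmax_r]. rewrite Cmod_Cinv. apply Rinv_le_contravar; lra.
Qed.

Lemma Rabs_Int_part_le (x : R) : Rabs (IZR (Int_part x)) <= Rabs x + 1.
Proof.
  destruct (base_Int_part x) as [H1 H2].
  generalize (Rle_abs x) (Rle_abs (- x)). rewrite Rabs_Ropp. intros. apply Rabs_le. lra.
Qed.

Lemma Re_sub_Int_part (N : nat) (t : C) : 0 < Nr N ->
  0 <= Re (t - RtoC (IZR (Int_part (Nr N * Re t)) / Nr N)) <= / Nr N.
Proof.
  intros HN. destruct (base_Int_part (Nr N * Re t)) as [H1 H2].
  unfold Re at 1; simpl. change (fst t) with (Re t).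
  split; apply (Rmult_le_reg_l (Nr N)); try lra; field_simplify; lra.
Qed.

(* At most [N R0 + 1] factors of the functional equation separate [E_N t] from the strip. *)
Lemma E_N_bounded (N : nat) (R0 a A : R) : (2 <= N)%nat -> 0 < a -> a <= A ->
  exists M, forall t : C, Rabs (Re t) <= R0 -> a <= Rabs (Im t) <= A -> Cmod_pm_le M (E_N N t).
Proof.
  intros HN Ha HaA. assert (HN2 := Nr_ge2 N HN).
  destruct (E_N_strip_bounded N A HN ltac:(lra)) as [M0 HM0].
  set (U := Rmax (1 + exp (2 * PI * A)) (/ (1 - exp (- (2 * PI * a))))).
  assert (HU : 1 <= U) by (eapply Rle_trans; [|apply Rmax_l]; generalize (exp_pos (2 * PI * A)); lra).
  destruct (nfloor_ex (Rmax 0 (Nr N * R0 + 1)) (Rmax_l _ _)) as [K [_ HK]].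
  exists (M0 * U ^ S K). intros t Hre Him.
  set (t0 := (t - RtoC (IZR (Int_part (Nr N * Re t)) / Nr N))%C).
  assert (Ht0 : Cmod_pm_le M0 (E_N_strip N t0)).
  { apply HM0; [apply Re_sub_Int_part; lra|].
    unfold t0, Im in *; simpl. rewrite Ropp_0, Rplus_0_r. lra. }
  assert (HM0pos : 0 <= M0) by (eapply Rle_trans; [apply Cmod_ge_0 | apply Ht0]).
  assert (Hfac : forall s : C, Im s = Im t -> Cmod_pm_le U (RtoC 1 - cexp (RtoC (2 * PI) * Ci * s))).
  { intros s Hs. apply Cmod_pm_le_one_minus_cexp; [|rewrite Hs]; assumption. }
  assert (Hmono : forall n : nat, INR n <= Rabs (IZR (Int_part (Nr N * Re t))) ->
            M0 * U ^ n <= M0 * U ^ S K).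
  { intros n Hn. apply Rmult_le_compat_l, Rle_pow, INR_le; [lra | exact HU|].
    generalize (Rabs_Int_part_le (Nr N * Re t)) (Rmax_r 0 (Nr N * R0 + 1)).
    rewrite Rabs_mult, (Rabs_pos_eq (Nr N)), S_INR by lra. nra. }
  unfold E_N; cbv zeta. fold t0. clearbody t0.
  destruct (Int_part (Nr N * Re t)) as [|q|q].
  - apply (Cmod_pm_le_trans M0); [|exact Ht0].
    rewrite <- (Rmult_1_r M0) at 1. apply Rmult_le_compat_l, pow_R1_Rle; assumption.
  - apply (Cmod_pm_le_trans (M0 * U ^ Pos.to_nat q)).
    + apply Hmono. rewrite INR_IPR. apply Rle_abs.
    + apply Cmod_pm_le_mult, Cmod_pm_le_Cinv, Cmod_pm_le_cprod; [exact Ht0|].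
      intros j. apply Hfac. unfold Im; simpl. ring.
  - apply (Cmod_pm_le_trans (M0 * U ^ Pos.to_nat q)).
    + apply Hmono. rewrite INR_IPR. change (IZR (Z.neg q)) with (- IPR q).
      rewrite Rabs_Ropp. apply Rle_abs.
    + apply Cmod_pm_le_mult, Cmod_pm_le_cprod; [exact Ht0|].
      intros j. apply Hfac. unfold Im; simpl. ring.
Qed.

(** * Local boundedness *)

Section NoPole.
Variables (n : nat) (p : nat -> C).

Definition near (d : R) (x : nat -> C) : Prop := forall i, (i < n)%nat -> Cmod (x i - p i) < d.

Definition continuous_at (g : (nat -> C) -> C) : Prop :=
  forall eps, 0 < eps -> exists d, 0 < d /\ forall x, near d x -> Cmod (g x - g p) < eps.

Lemma near_le (d1 d2 : R) (x : nat -> C) : d1 <= d2 -> near d1 x -> near d2 x.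
Proof. intros H Hx i Hi. specialize (Hx i Hi). lra. Qed.

Lemma continuous_at_const (c : C) : continuous_at (fun _ => c).
Proof.
  intros e He. exists 1. split; [lra|]. intros x _.
  replace (c - c)%C with (RtoC 0) by ring. rewrite Cmod_0. exact He.
Qed.

Lemma continuous_at_coord (i : nat) : (i < n)%nat -> continuous_at (fun x => x i).
Proof. intros Hi e He. exists e. split; [exact He|]. intros x Hx. apply Hx, Hi. Qed.

Lemma continuous_at_plus (f g : (nat -> C) -> C) :
  continuous_at f -> continuous_at g -> continuous_at (fun x => f x + g x)%C.
Proof.
  intros Hf Hg e He.
  destruct (Hf (e / 2) ltac:(lra)) as [d1 [Hd1 H1]], (Hg (e / 2) ltac:(lra)) as [d2 [Hd2 H2]].
  exists (Rmin d1 d2). split; [apply Rmin_glb_lt; assumption|]. intros x Hx.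
  replace (f x + g x - (f p + g p))%C with ((f x - f p) + (g x - g p))%C by ring.
  eapply Rle_lt_trans; [apply Cmod_triangle|].
  assert (Cmod (f x - f p) < e / 2) by (apply H1; eapply near_le; [apply Rmin_l | exact Hx]).
  assert (Cmod (g x - g p) < e / 2) by (apply H2; eapply near_le; [apply Rmin_r | exact Hx]).
  lra.
Qed.

Lemma continuous_at_scal (c : C) (g : (nat -> C) -> C) :
  continuous_at g -> continuous_at (fun x => c * g x)%C.
Proof.
  intros Hg e He. assert (Hc := Cmod_ge_0 c).
  destruct (Hg (e / (Cmod c + 1)) ltac:(apply Rdiv_lt_0_compat; lra)) as [d [Hd H]].
  exists d. split; [exact Hd|]. intros x Hx.
  replace (c * g x - c * g p)%C with (c * (g x - g p))%C by ring. rewrite Cmod_mult.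
  specialize (H x Hx). assert (Hg0 := Cmod_ge_0 (g x - g p)%C).
  apply Rle_lt_trans with ((Cmod c + 1) * Cmod (g x - g p)%C); [nra|].
  apply (Rmult_lt_reg_r (/ (Cmod c + 1))); [apply Rinv_0_lt_compat; lra|].
  replace ((Cmod c + 1) * Cmod (g x - g p)%C * / (Cmod c + 1)) with (Cmod (g x - g p)%C) by (field; lra).
  exact H.
Qed.

Lemma continuous_at_opp (g : (nat -> C) -> C) : continuous_at g -> continuous_at (fun x => - g x)%C.
Proof.
  intros Hg e He. destruct (Hg e He) as [d [Hd H]]. exists d. split; [exact Hd|]. intros x Hx.
  replace (- g x - - g p)%C with (- (g x - g p))%C by ring. rewrite Cmod_opp. apply H, Hx.
Qed.

Lemma continuous_at_minus (f g : (nat -> C) -> C) :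
  continuous_at f -> continuous_at g -> continuous_at (fun x => f x - g x)%C.
Proof. intros Hf Hg. apply continuous_at_plus; [exact Hf | apply continuous_at_opp, Hg]. Qed.

Lemma no_pole_at_const (c : C) : no_pole_at n (fun _ => c) p.
Proof. exists 1. split; [lra|]. exists (Cmod c). intros; lra. Qed.

Lemma no_pole_at_mult (f g : (nat -> C) -> C) :
  no_pole_at n f p -> no_pole_at n g p -> no_pole_at n (fun x => f x * g x)%C p.
Proof.
  intros [d1 [Hd1 [M1 H1]]] [d2 [Hd2 [M2 H2]]].
  exists (Rmin d1 d2). split; [apply Rmin_glb_lt; assumption|]. exists (M1 * M2).
  intros x Hx. rewrite Cmod_mult. apply Rmult_le_compat; try apply Cmod_ge_0.
  - apply H1, (near_le (Rmin d1 d2)); [apply Rmin_l | exact Hx].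
  - apply H2, (near_le (Rmin d1 d2)); [apply Rmin_r | exact Hx].
Qed.

Lemma no_pole_at_div (f g : (nat -> C) -> C) :
  no_pole_at n f p -> no_pole_at n (fun x => / g x)%C p -> no_pole_at n (fun x => f x / g x)%C p.
Proof. apply no_pole_at_mult. Qed.

Lemma no_pole_at_prod {A : Type} (F : A -> (nat -> C) -> C) (l : list A) :
  (forall a, In a l -> no_pole_at n (F a) p) ->
  no_pole_at n (fun x => fold_right Cmult (RtoC 1) (map (fun a => F a x) l)) p.
Proof.
  induction l as [|a l IH]; intros H; simpl.
  - apply no_pole_at_const.
  - apply no_pole_at_mult; [apply H; left; reflexivity | apply IH; intros; apply H; right; assumption].
Qed.

Lemma no_pole_at_Cinv_mult (f g : (nat -> C) -> C) :
  no_pole_at n (fun x => / f x)%C p -> no_pole_at n (fun x => / g x)%C p ->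
  no_pole_at n (fun x => / (f x * g x))%C p.
Proof.
  intros Hf Hg. destruct (no_pole_at_mult _ _ Hf Hg) as [d [Hd [M HM]]].
  exists d. split; [exact Hd|]. exists M. intros x Hx. specialize (HM x Hx).
  rewrite Cmod_mult, !Cmod_Cinv in HM. rewrite Cmod_Cinv, Cmod_mult, Rinv_mult. exact HM.
Qed.

Lemma continuous_at_Re_Im (g : (nat -> C) -> C) (eps : R) : continuous_at g -> 0 < eps ->
  exists d, 0 < d /\ forall x, near d x ->
    Rabs (Re (g x) - Re (g p)) < eps /\ Rabs (Im (g x) - Im (g p)) < eps.
Proof.
  intros Hg He. destruct (Hg eps He) as [d [Hd H]]. exists d. split; [exact Hd|].
  intros x Hx. specialize (H x Hx). assert (HM := Rmax_Cmod (g x - g p)%C).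
  generalize (Rmax_l (Rabs (fst (g x - g p)%C)) (Rabs (snd (g x - g p)%C)))
             (Rmax_r (Rabs (fst (g x - g p)%C)) (Rabs (snd (g x - g p)%C))).
  unfold Re, Im. destruct (g x), (g p). simpl in *. unfold Rminus. lra.
Qed.

Lemma no_pole_at_cexp (h : (nat -> C) -> C) : continuous_at h -> no_pole_at n (fun x => cexp (h x)) p.
Proof.
  intros Hh. destruct (continuous_at_Re_Im h 1 Hh ltac:(lra)) as [d [Hd H]].
  exists d. split; [exact Hd|]. exists (exp (Re (h p) + 1)).
  intros x Hx. rewrite Cmod_cexp. apply exp_le_exp.
  destruct (H x Hx) as [HRe _]. generalize (Rle_abs (Re (h x) - Re (h p))). lra.
Qed.

Lemma no_pole_at_E_N (N : nat) (g : (nat -> C) -> C) :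
  (2 <= N)%nat -> continuous_at g -> Im (g p) <> 0 ->
  no_pole_at n (fun x => E_N N (g x)) p /\ no_pole_at n (fun x => / E_N N (g x))%C p.
Proof.
  intros HN Hg Him. set (a := Rabs (Im (g p)) / 2).
  assert (Ha : 0 < a) by (unfold a; generalize (Rabs_pos_lt _ Him); lra).
  destruct (E_N_bounded N (Rabs (Re (g p)) + 1) a (Rabs (Im (g p)) + 1) HN Ha
              ltac:(unfold a; generalize (Rabs_pos (Im (g p))); lra)) as [M HM].
  destruct (continuous_at_Re_Im g (Rmin 1 a) Hg ltac:(apply Rmin_glb_lt; lra)) as [d [Hd H]].
  assert (Hbound : forall x, near d x -> Cmod_pm_le M (E_N N (g x))).
  { intros x Hx. destruct (H x Hx) as [HRe HIm]. apply HM.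
    - generalize (Rabs_triang_inv (Re (g x)) (Re (g p))) (Rmin_l 1 a). lra.
    - generalize (Rabs_triang_inv (Im (g x)) (Im (g p))) (Rabs_triang_inv (Im (g p)) (Im (g x)))
        (Rmin_l 1 a) (Rmin_r 1 a).
      rewrite (Rabs_minus_sym (Im (g p))). unfold a in *. lra. }
  split; exists d; (split; [exact Hd|]); exists M; intros x Hx; apply (Hbound x Hx).
Qed.

End NoPole.

(** * Crossing weights *)

Lemma Cmod_epow_div_neq1 (e : bool) (X Y : C) (u v : R) :
  Cmod X = exp u -> Cmod Y = exp v -> Cmod (epow e (X / Y)) <> 1 -> u <> v.
Proof.
  intros HX HY Hne E. apply Hne.
  assert (H : Cmod (X / Y) = 1).
  { unfold Cdiv. rewrite Cmod_mult, Cmod_Cinv, HX, HY, E. apply Rinv_r, Rgt_not_eq, exp_pos. }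
  destruct e; simpl; [exact H|]. rewrite Cmod_Cinv, H. apply Rinv_1.
Qed.

Lemma Im_Cminus (z w : C) : Im (z - w) = Im z - Im w.
Proof. destruct z, w; unfold Im; simpl; ring. Qed.

Lemma Im_Cdiv_RtoC (z : C) (r : R) : r <> 0 -> Im (z / RtoC r) = Im z / r.
Proof. intros Hr. destruct z; unfold Im; simpl. field. exact Hr. Qed.

Section Crossing.
Variables (N : nat) (mu : C) (D : diagram) (b beta : nat -> C).
Hypothesis HN : (2 <= N)%nat.
Hypothesis Hbeta : forall i, (i < nE D)%nat -> cexp (twopii * beta i) = b i.

Definition seg_in_range (s : seg) : Prop := forall i, s = Defs.Int i -> (i < nE D)%nat.

Definition beta_shift (x : nat -> C) : nat -> C :=
  fun i => Cplus (Cdiv (beta i) (RtoC (INR N))) (x i).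

(* [Im beta_s], with [beta = 0] on the boundary segments. *)
Local Notation Ib s := (Im (init_val D beta s)).

Lemma Nr_pos : 0 < Nr N.
Proof. generalize (Nr_ge2 N HN). lra. Qed.

Lemma Im_init_val_beta_shift (t : nat -> R) (s : seg) :
  Im (init_val D (beta_shift (fun i => RtoC (t i))) s) = Ib s / Nr N.
Proof.
  assert (HNp := Nr_pos). destruct s; unfold Im; simpl; [field; lra | field; lra|].
  unfold Nr in *. field. lra.
Qed.

Lemma Im_final_val_beta_shift (t : nat -> R) (s : seg) :
  Im (final_val N D (beta_shift (fun i => RtoC (t i))) s) = Ib s / Nr N.
Proof. unfold final_val. rewrite im_plus, Im_init_val_beta_shift, im_RtoC. ring. Qed.

Lemma continuous_at_init_val (p : nat -> C) (s : seg) : seg_in_range s ->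
  continuous_at (nE D) p (fun x => init_val D (beta_shift x) s).
Proof.
  intros Hs. destruct s; simpl; try apply continuous_at_const.
  apply continuous_at_plus; [apply continuous_at_const | apply continuous_at_coord, Hs; reflexivity].
Qed.

Lemma continuous_at_final_val (p : nat -> C) (s : seg) : seg_in_range s ->
  continuous_at (nE D) p (fun x => final_val N D (beta_shift x) s).
Proof.
  intros Hs. apply continuous_at_plus; [apply continuous_at_init_val, Hs | apply continuous_at_const].
Qed.

Lemma Cmod_bval (s : seg) : seg_in_range s -> Cmod (bval b s) = exp (- (2 * PI) * Ib s).
Proof.
  intros Hs. destruct s; simpl.
  1, 2: rewrite Cmod_R, Rabs_R1, Rmult_0_r, exp_0; reflexivity.
  rewrite <- Hbeta by (apply Hs; reflexivity). unfold twopii. rewrite Cmod_cexp.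
  f_equal. destruct (beta i); unfold Re, Im; simpl; ring.
Qed.

Lemma Cmod_meridian_bval (s : seg) : seg_in_range s ->
  Cmod (meridian mu * bval b s) = exp (- (2 * PI) * (Im mu + Ib s)).
Proof.
  intros Hs. rewrite Cmod_mult, Cmod_bval by exact Hs.
  unfold meridian, twopii. rewrite Cmod_cexp, <- exp_plus. f_equal.
  destruct mu; unfold Re, Im; simpl; ring.
Qed.

Lemma Im_args_neq0 (c : crossing) :
  seg_in_range (s1 c) -> seg_in_range (s2 c) -> seg_in_range (s1' c) -> seg_in_range (s2' c) ->
  (forall z, In z (shapes mu b c) -> Cmod z <> 1) ->
  Ib (s2' c) - Ib (s1 c) <> 0 /\ Ib (s2 c) - Ib (s1' c) <> 0 /\
  Ib (s2 c) - Ib (s1 c) - Im mu <> 0 /\ Im mu + Ib (s2' c) - Ib (s1' c) <> 0.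
Proof.
  intros H1 H2 H1' H2' Hz. assert (HPI := PI_RGT_0).
  assert (HzN := Hz _ (or_introl eq_refl)).
  assert (HzS := Hz _ (or_intror (or_introl eq_refl))).
  assert (HzW := Hz _ (or_intror (or_intror (or_introl eq_refl)))).
  assert (HzE := Hz _ (or_intror (or_intror (or_intror (or_introl eq_refl))))).
  repeat split; intros E.
  - apply (Cmod_epow_div_neq1 _ _ _ _ _ (Cmod_bval _ H2') (Cmod_bval _ H1) HzN). nra.
  - apply (Cmod_epow_div_neq1 _ _ _ _ _ (Cmod_bval _ H2) (Cmod_bval _ H1') HzS). nra.
  - apply (Cmod_epow_div_neq1 _ _ _ _ _ (Cmod_bval _ H2) (Cmod_meridian_bval _ H1) HzW). nra.
  - apply (Cmod_epow_div_neq1 _ _ _ _ _ (Cmod_meridian_bval _ H2') (Cmod_bval _ H1') HzE). nra.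
Qed.

Ltac continuity_at := repeat first
  [ apply continuous_at_init_val; assumption | apply continuous_at_final_val; assumption
  | apply continuous_at_const | apply continuous_at_plus | apply continuous_at_minus
  | apply continuous_at_opp | apply continuous_at_scal ].

Ltac Im_arg_neq0 Hne :=
  cbv beta; repeat first [rewrite Im_Cminus | rewrite im_plus | rewrite im_opp];
  rewrite ?Im_init_val_beta_shift, ?Im_final_val_beta_shift, ?Im_Cdiv_RtoC, ?im_RtoC
    by (apply Rgt_not_eq, Nr_pos);
  let E := fresh "E" in
  intros E; apply Hne; apply (Rmult_eq_reg_r (/ Nr N));
  [unfold Rdiv in E; lra | apply Rinv_neq_0_compat, Rgt_not_eq, Nr_pos].

Lemma no_pole_at_crossing_weight (t : nat -> R) (c : crossing) :
  seg_in_range (s1 c) -> seg_in_range (s2 c) -> seg_in_range (s1' c) -> seg_in_range (s2' c) ->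
  (forall z, In z (shapes mu b c) -> Cmod z <> 1) ->
  no_pole_at (nE D) (fun x => crossing_weight N mu D (beta_shift x) c) (fun i => RtoC (t i)).
Proof.
  intros H1 H2 H1' H2' Hz.
  destruct (Im_args_neq0 c H1 H2 H1' H2' Hz) as [HNo [HSo [HWe HEa]]].
  pose proof (fun g => no_pole_at_E_N (nE D) (fun i => RtoC (t i)) N g HN) as HE.
  unfold crossing_weight. destruct (Defs.positive c); [unfold Lambda_plus | unfold Lambda_minus];
    cbv zeta;
    (apply no_pole_at_mult;
      [apply no_pole_at_div; [apply no_pole_at_mult | apply no_pole_at_Cinv_mult]
      | apply no_pole_at_cexp; continuity_at]).
  - refine (proj1 (HE _ _ _)); [continuity_at | Im_arg_neq0 HNo].
  - refine (proj1 (HE _ _ _)); [continuity_at | Im_arg_neq0 HSo].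
  - refine (proj2 (HE _ _ _)); [continuity_at | Im_arg_neq0 HWe].
  - refine (proj2 (HE _ _ _)); [continuity_at | Im_arg_neq0 HEa].
  - refine (proj1 (HE _ _ _)); [continuity_at | Im_arg_neq0 HWe].
  - refine (proj1 (HE _ _ _)); [continuity_at | Im_arg_neq0 HEa].
  - refine (proj2 (HE _ _ _)); [continuity_at | Im_arg_neq0 HNo].
  - refine (proj2 (HE _ _ _)); [continuity_at | Im_arg_neq0 HSo].
Qed.

End Crossing.

Lemma crossing_segs_in_range (D : diagram) (c : crossing) : wf_diagram D -> In c (crossings D) ->
  seg_in_range D (s1 c) /\ seg_in_range D (s2 c) /\ seg_in_range D (s1' c) /\ seg_in_range D (s2' c).
Proof.
  intros [_ [Hout _]] Hc.
  assert (Hin : forall s, In s (incoming D) \/ In s (outgoing D) -> seg_in_range D s).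
  { intros s Hs i ->. destruct (Nat.lt_ge_cases i (nE D)) as [Hi|Hi]; [exact Hi|].
    exfalso. destruct (Hout i Hi). tauto. }
  repeat split; apply Hin; [left | left | right | right];
    apply in_flat_map; exists c; (split; [exact Hc | simpl; tauto]).
Qed.

Theorem mainTheorem3 (N : nat) (mu : C) (D : diagram) (b beta : nat -> C) :
  (2 <= N)%nat ->
  wf_diagram D ->
  segment_equations D mu b ->
  (forall i, (i < nE D)%nat -> b i <> RtoC 0) ->
  (forall c z, In c (crossings D) -> In z (shapes mu b c) ->
     Cmod z <> 1%R /\ z <> RtoC 0) ->
  (forall i, (i < nE D)%nat -> cexp (twopii * beta i) = b i) ->
  forall t : nat -> R,
    no_pole_at (nE D)
      (fun x : nat -> C => W N mu D (fun i => Cplus (Cdiv (beta i) (RtoC (INR N))) (x i)))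
      (fun i => RtoC (t i)).
Proof.
  intros HN Hwf _ _ Hshapes Hbeta t.
  apply (no_pole_at_prod _ _ (fun c x => crossing_weight N mu D (beta_shift N beta x) c)).
  intros c Hc. destruct (crossing_segs_in_range D c Hwf Hc) as [H1 [H2 [H1' H2']]].
  apply (no_pole_at_crossing_weight N mu D b beta HN Hbeta); try assumption.
  intros z Hz. apply (Hshapes c z Hc Hz).
Qed.
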